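(* Let $G$ be a group, $K\lhd G$ a normal subgroup and $L\subset K$ a subset whose normal closure in $G$ is $K$. Then $L^{\#\#}=K^{\#\#}$ as ideals of $\kappa G^\#$.
   Context: Let $\kappa$ be a field of characteristic $0$. For a group $G$, let $*:\kappa G\to\kappa G$ be the $\kappa$-linear map with $g^*=g^{-1}$ for $g\in G$, and $(\kappa G)^*$ its fixed points. $A_G$ is the quotient of $\kappa G$ by the two-sided ideal generated by all $ab-ba$ with $a\in\kappa G$, $b\in(\kappa G)^*$; $*$ descends to $A_G$, and $\kappa G^\#=\{x\in A_G:x^*=x\}$ (a commutative subring of the centre of $A_G$). Group elements are identified with their images in $A_G$, and $\bar x=\tfrac12(x+x^* )$ for $x\in A_G$. For a subset $L\subset G$, $L^{\#\#}$ is the ideal of $\kappa G^\#$ generated by $\{\overline{xl}-\overline{xl^{-1}}: x\in A_G,\ l\in L\}$ (equivalently by $\{\overline{bl}-\overline{bl^{-1}}: b\in B, l\in L\}$ for any generating set $B$ of the $\kappa G^\#$-module $\Lambda_G=\{x\in A_G:x^*=-x\}$). *)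

(* G is an arbitrary (possibly infinite) group: a
   [groupType] from mathcomp/boot/monoid.v (a choiceType with a group law). *)
From HB Require Import structures.
From mathcomp Require Import all_boot all_order all_algebra.
Set Implicit Arguments. Unset Strict Implicit. Unset Printing Implicit Defensive.
Import GRing.Theory.
Local Open Scope ring_scope.

Section GroupAlgebra.
Variables (k : fieldType) (G : groupType).

(* Elements of the group algebra kG are represented by finite formal sums
   [:: (c_1, g_1); ...; (c_n, g_n)] standing for  sum_i c_i g_i. *)
Definition kg := seq (k * G).

Definition kg_coef (x : kg) (g : G) : k := \sum_(p <- x | p.2 == g) p.1.
Definition kg_eq (x y : kg) : Prop := forall g, kg_coef x g = kg_coef y g.

Definition kg_of (g : G) : kg := [:: (1, g)].
Definition kg_add (x y : kg) : kg := x ++ y.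
Definition kg_scale (c : k) (x : kg) : kg := [seq (c * p.1, p.2) | p <- x].
Definition kg_sub (x y : kg) : kg := kg_add x (kg_scale (-1) y).
Definition kg_mul (x y : kg) : kg :=
  [seq (p.1 * q.1, (p.2 * q.2)%g) | p <- x, q <- y].
Definition kg_star (x : kg) : kg := [seq (p.1, (p.2)^-1%g) | p <- x].

(* The two-sided ideal I of kG generated by all  a b - b a  with a in kG and
   b fixed by star (i.e. star b = b in kG): finite sums of  u (a b - b a) v. *)
Definition in_I (x : kg) : Prop :=
  exists s : seq (kg * kg * kg * kg),
    (forall t, t \in s -> kg_eq (kg_star t.1.2) t.1.2) /\
    kg_eq x (flatten [seq kg_mul (kg_mul t.1.1.1
                         (kg_sub (kg_mul t.1.1.2 t.1.2) (kg_mul t.1.2 t.1.1.2)))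
                         t.2 | t <- s]).

Definition AG_eq (x y : kg) : Prop := in_I (kg_sub x y).

Definition in_sharp (x : kg) : Prop := AG_eq (kg_star x) x.

Definition kg_bar (x : kg) : kg := kg_scale (2%:R)^-1 (kg_add x (kg_star x)).

Definition sharp_gen (x : kg) (l : G) : kg :=
  kg_sub (kg_bar (kg_mul x (kg_of l))) (kg_bar (kg_mul x (kg_of (l^-1)%g))).

(* Membership (in A_G, up to AG_eq) in L^##, the ideal of the commutative
   ring kG^# generated by { bar(x l) - bar(x l^-1) : x in A_G, l in L }:
   finite sums  sum_i r_i (bar(x_i l_i) - bar(x_i l_i^-1)) with r_i in kG^#. *)
Definition in_sharpsharp (L : G -> Prop) (y : kg) : Prop :=
  exists s : seq (kg * kg * G),
    (forall t, t \in s -> in_sharp t.1.1 /\ L t.2) /\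
    AG_eq y (flatten [seq kg_mul t.1.1 (sharp_gen t.1.2 t.2) | t <- s]).

End GroupAlgebra.

Definition is_subgroup (G : groupType) (H : G -> Prop) : Prop :=
  H 1%g /\ forall x y, H x -> H y -> H (x * y^-1)%g.

Definition is_normal (G : groupType) (H : G -> Prop) : Prop :=
  is_subgroup H /\ forall x g, H x -> H (x ^ g)%g.

Definition is_normal_closure (G : groupType) (L K : G -> Prop) : Prop :=
  is_normal K /\ (forall l, L l -> K l) /\
  forall N : G -> Prop, is_normal N -> (forall l, L l -> N l) ->
    forall x, K x -> N x.

(* Write a* for the involution of A = A_G, tr a = a + a*, and
   D(a, l) = bar(a l) - bar(a l^-1) = (tr (a l) - tr (a l^-1)) / 2 for the
   generators of L^##.  The argument is ring-theoretic: it works in any ring R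
   with an anti-involution whose traces tr a are central and in which 2 is
   invertible, and A_G is such a ring by the very relations defining it.  There
   every symmetric element is central (a = tr a / 2), tr (a b) = tr (b a), and
       D(a, g h) = D(a g, h) + tau h * D(a, g) - (tr a / 2) * D(g, h),
       D(a, g^-1) = - D(a, g),       D(a, h^-1 g h) = D(h a h^-1, g),
   with tau g = tr g / 2 symmetric.  So the g whose generators D(a, g) all lie
   in the ideal spanned by the D(_, l), l in L, form a normal subgroup
   containing L, hence containing K: K^## is inside L^##, and the converse
   inclusion is monotonicity. *)

From HB Require Import structures.
From mathcomp Require Import all_boot all_order all_algebra.
From Stdlib Require Import Setoid Morphisms ClassicalEpsilon.
Set Implicit Arguments. Unset Strict Implicit. Unset Printing Implicit Defensive.
Import GRing.Theory.
Local Open Scope ring_scope.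

Section InvolutiveRing.
Variables (R : pzRingType) (star : R -> R).
Hypothesis starD : {morph star : a b / a + b}.
Hypothesis starM : forall a b, star (a * b) = star b * star a.
Hypothesis starK : involutive star.

Definition tr (a : R) : R := a + star a.
Definition sym (a : R) : Prop := star a = a.

Lemma star0 : star 0 = 0.
Proof. by apply: (@addrI _ (star 0)); rewrite -starD !addr0. Qed.

Lemma starN a : star (- a) = - star a.
Proof. by apply/eqP; rewrite -addr_eq0 -starD addNr star0. Qed.

Lemma star1 : star 1 = 1.
Proof. by have := starM (star 1) 1; rewrite mulr1 !starK mulr1 => /esym. Qed.

Lemma sym_tr a : sym (tr a).
Proof. by rewrite /sym /tr starD starK addrC. Qed.

Lemma sym1 : sym 1. Proof. exact: star1. Qed.

Lemma sym_opp a : sym a -> sym (- a).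
Proof. by rewrite /sym starN => ->. Qed.

Lemma trB a b : tr (a - b) = tr a - tr b.
Proof. by rewrite /tr starD starN opprD addrACA. Qed.

(* Traces are central; in A_G this is exactly the defining relation. *)
Hypothesis tr_central : forall a c, tr a * c = c * tr a.

(* The trace is symmetric in the two factors of a product: add up the
   centrality relations  tr a * b = b * tr a  and  tr b * a* = a* * tr b. *)
Lemma tr_mulC a b : tr (a * b) = tr (b * a).
Proof.
have Ca := tr_central a b; have Cb := tr_central b (star a).
rewrite /tr mulrDl mulrDr in Ca; rewrite /tr mulrDl mulrDr in Cb.
rewrite /tr !starM; apply: (@addIr _ (star a * b + b * star a)).
rewrite addrACA Ca (addrC (star b * _)) Cb.
by rewrite addrACA [RHS]addrACA (addrC (star a * star b)).
Qed.

Variable half : R.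
Hypothesis half2 : half + half = 1.

Lemma half_central c : half * c = c * half.
Proof.
have two_half : (1 + 1) * half = 1 by rewrite mulrDl mul1r.
have half_two : half * (1 + 1) = 1 by rewrite mulrDr mulr1.
have two_central : c * (1 + 1) = (1 + 1) * c by rewrite mulrDr mulrDl mulr1 mul1r.
rewrite -[in LHS](mulr1 (half * c)) -two_half mulrA -(mulrA half) two_central.
by rewrite mulrA half_two mul1r.
Qed.

(* star half is also an inverse of 2, hence equals half. *)
Lemma sym_half : sym half.
Proof.
have star_half2 : star half + star half = 1 by rewrite -starD half2 star1.
by rewrite /sym -[LHS]mulr1 -half2 mulrDr -mulrDl star_half2 mul1r.
Qed.

(* A symmetric element is half its trace; this is where 2 <> 0 is used. *)
Lemma sym_half_tr a : sym a -> a = half * tr a.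
Proof. by move=> sa; rewrite /tr sa mulrDr -mulrDl half2 mul1r. Qed.

Lemma sym_central a c : sym a -> a * c = c * a.
Proof.
by move=> /sym_half_tr ->; rewrite -mulrA tr_central mulrA half_central mulrA.
Qed.

Lemma sym_mul a b : sym a -> sym b -> sym (a * b).
Proof. by move=> sa sb; rewrite /sym starM sa sb; apply: sym_central. Qed.

Lemma tr_mulr a c : sym c -> tr (a * c) = c * tr a.
Proof. by move=> sc; rewrite /tr starM sc mulrDr (sym_central a sc). Qed.

Variables (G : groupType) (gam : G -> R).
Hypothesis gamM : {morph gam : g h / (g * h)%g >-> g * h}.
Hypothesis gam1 : gam 1%g = 1.
Hypothesis star_gam : forall g, star (gam g) = gam g^-1%g.

(* The generator  bar(a l) - bar(a l^-1)  of L^##, with bar = half * tr,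
   and the symmetric element  tau g = bar(g) = (g + g^-1) / 2. *)
Definition delta (a : R) (l : G) : R :=
  half * (tr (a * gam l) - tr (a * gam l^-1%g)).
Definition tau (g : G) : R := half * tr (gam g).

Lemma sym_tau g : sym (tau g).
Proof. exact: sym_mul sym_half (sym_tr _). Qed.

(* Since  g^-1 = tr g - g,  the generator can be written with g alone. *)
Lemma delta_tau a g : delta a g = tr (a * gam g) - tau g * tr a.
Proof.
have gamV : gam g^-1%g = tr (gam g) - gam g by rewrite /tr star_gam addrC addKr.
rewrite /delta gamV (mulrBr a) trB (tr_mulr _ (sym_tr _)) opprB addrA mulrBr.
by rewrite mulrDr -mulrDl half2 mul1r /tau mulrA.
Qed.

Lemma delta1 a : delta a 1%g = 0.
Proof. by rewrite /delta invg1 subrr mulr0. Qed.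

Lemma deltaV a g : delta a g^-1%g = - delta a g.
Proof. by rewrite /delta invgK -mulrN opprB. Qed.

Lemma half_delta_gam g h : half * delta (gam g) h = tau (g * h) - tau h * tau g.
Proof.
rewrite delta_tau mulrBr /tau gamM; congr (_ - _).
by rewrite !mulrA -(mulrA half _ half) -half_central mulrA.
Qed.

(* The cocycle-like identity behind closure of the absorbed set under
   products:  D(a, gh) = D(ag, h) + tau h D(a, g) - (tr a / 2) D(g, h). *)
Lemma delta_mul a g h :
  delta a (g * h) =
  delta (a * gam g) h + tau h * delta a g - tr a * half * delta (gam g) h.
Proof.
rewrite -mulrA half_delta_gam !delta_tau gamM mulrA !mulrBr addrA subrK.
rewrite (sym_central _ (sym_tau _)) mulrA.
rewrite (sym_central _ (sym_mul (sym_tau h) (sym_tau g))).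
by rewrite opprB addrA subrK.
Qed.

Lemma delta_conj a g h :
  delta a (g ^ h)%g = delta (gam h * a * gam h^-1%g) g.
Proof.
have gamVh : gam h^-1%g * gam h = 1 by rewrite -gamM mulVg gam1.
have gamhV : gam h * gam h^-1%g = 1 by rewrite -gamM mulgV gam1.
rewrite !delta_tau conjgE !gamM; congr (_ - _ * _).
- by rewrite !mulrA tr_mulC !mulrA.
- by rewrite /tau !gamM mulrA tr_mulC mulrA gamhV mul1r.
- by rewrite -mulrA tr_mulC -mulrA gamVh mulr1.
Qed.

(* Membership in the ideal of the ring of symmetric elements generated by
   the  delta a l  with l in P:  finite sums  sum_i c_i * delta a_i l_i. *)
Definition inJ (P : G -> Prop) (w : R) : Prop :=
  exists s : seq (R * R * G),
    (forall t, t \in s -> sym t.1.1 /\ P t.2) /\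
    w = \sum_(t <- s) t.1.1 * delta t.1.2 t.2.

Lemma inJ0 P : inJ P 0.
Proof. by exists [::]; rewrite big_nil. Qed.

Lemma inJD P w1 w2 : inJ P w1 -> inJ P w2 -> inJ P (w1 + w2).
Proof.
move=> [s1 [sym1 ->]] [s2 [sym2 ->]]; exists (s1 ++ s2); rewrite big_cat.
by split=> // t; rewrite mem_cat => /orP[]; [apply: sym1 | apply: sym2].
Qed.

Lemma inJ_symM P c w : sym c -> inJ P w -> inJ P (c * w).
Proof.
move=> sc [s [sym_s ->]]; exists [seq (c * t.1.1, t.1.2, t.2) | t <- s].
rewrite big_map mulr_sumr; split; last by apply: eq_bigr => t _; rewrite mulrA.
by move=> _ /mapP[t ts ->]; have [st Pt] := sym_s t ts; split=> //; apply: sym_mul.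
Qed.

Lemma inJN P w : inJ P w -> inJ P (- w).
Proof. by rewrite -mulN1r; apply: inJ_symM; apply: sym_opp sym1. Qed.

Lemma inJ_delta (P : G -> Prop) a l : P l -> inJ P (delta a l).
Proof.
move=> Pl; exists [:: (1, a, l)]; split; last by rewrite big_seq1 mul1r.
by move=> t /[1!inE] /eqP ->; split; first exact: sym1.
Qed.

Lemma inJ_transfer (P Q : G -> Prop) w :
  (forall g, P g -> forall a, inJ Q (delta a g)) -> inJ P w -> inJ Q w.
Proof.
move=> PQ [s [sym_s ->]]; elim: s sym_s => [|t s IHs] sym_s.
  by rewrite big_nil; apply: inJ0.
have [st Pt] := sym_s t (mem_head _ _); rewrite big_cons.
apply: inJD; first exact: inJ_symM st (PQ _ Pt _).
by apply: IHs => u us; apply: sym_s; rewrite inE us orbT.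
Qed.

Definition absorbed (L : G -> Prop) (g : G) : Prop := forall a, inJ L (delta a g).

Lemma absorbed_normal L : is_normal (absorbed L).
Proof.
split; last by move=> g h Ag a; rewrite delta_conj.
split=> [a | g h Ag Ah a]; first by rewrite delta1; apply: inJ0.
have sym_coef : sym (tr a * half) by apply: sym_mul; [apply: sym_tr | apply: sym_half].
rewrite delta_mul !deltaV mulrN opprK.
apply: inJD; first exact: inJD (inJN (Ah _)) (inJ_symM (sym_tau _) (Ag _)).
exact: inJ_symM sym_coef (Ah _).
Qed.

Lemma inJ_normal_closure (L K : G -> Prop) w :
  is_normal_closure L K -> inJ L w <-> inJ K w.
Proof.
move=> [_ [LK Kmin]]; split; apply: inJ_transfer => g.
  by move=> Lg a; apply: inJ_delta; apply: LK.
move=> Kg; apply: (Kmin (absorbed L)) => //; first exact: absorbed_normal.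
by move=> l Ll a; apply: inJ_delta.
Qed.

End InvolutiveRing.

(* Two formal sums
   represent the same element of kG iff all their evaluations agree, which
   turns identities in kG into identities of finite sums in k. *)
Section Evaluation.
Variables (k : fieldType) (G : groupType).
Implicit Types (x y : kg k G) (F : G -> k).

Definition ev x F : k := \sum_(p <- x) p.1 * F p.2.

Lemma ev_ext x F1 F2 : F1 =1 F2 -> ev x F1 = ev x F2.
Proof. by move=> eqF; apply: eq_bigr => p _; rewrite eqF. Qed.

Lemma ev_nil F : ev [::] F = 0.
Proof. exact: big_nil. Qed.

Lemma ev_cat x y F : ev (x ++ y) F = ev x F + ev y F.
Proof. exact: big_cat. Qed.

Lemma ev_scale c x F : ev (kg_scale c x) F = c * ev x F.
Proof. by rewrite /ev big_map mulr_sumr; apply: eq_bigr => p _; rewrite mulrA. Qed.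

Lemma ev_sub x y F : ev (kg_sub x y) F = ev x F - ev y F.
Proof. by rewrite ev_cat ev_scale mulN1r. Qed.

Lemma ev_star x F : ev (kg_star x) F = ev x (fun g => F g^-1%g).
Proof. exact: big_map. Qed.

Lemma ev_of g F : ev (kg_of k g) F = F g.
Proof. by rewrite /ev big_seq1 mul1r. Qed.

Lemma ev_mul x y F :
  ev (kg_mul x y) F = ev x (fun a => ev y (fun b => F (a * b)%g)).
Proof.
rewrite /ev big_allpairs_dep; apply: eq_bigr => p _.
by rewrite mulr_sumr; apply: eq_bigr => q _; rewrite mulrA.
Qed.

Lemma ev_flatten (T : Type) (f : T -> kg k G) s F :
  ev (flatten [seq f t | t <- s]) F = \sum_(t <- s) ev (f t) F.
Proof.
elim: s => [|t s IHs] /=; first by rewrite big_nil ev_nil.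
by rewrite ev_cat IHs big_cons.
Qed.

Lemma ev_sumF (T : Type) x (s : seq T) (f : T -> G -> k) :
  ev x (fun a => \sum_(t <- s) f t a) = \sum_(t <- s) ev x (f t).
Proof. by rewrite /ev; under eq_bigr do rewrite mulr_sumr; rewrite exchange_big. Qed.

Lemma ev_addF x F1 F2 : ev x (fun g => F1 g + F2 g) = ev x F1 + ev x F2.
Proof. by rewrite /ev -big_split; apply: eq_bigr => p _; rewrite mulrDr. Qed.

Lemma ev_subF x F1 F2 : ev x (fun g => F1 g - F2 g) = ev x F1 - ev x F2.
Proof. by rewrite /ev -sumrB; apply: eq_bigr => p _; rewrite mulrBr. Qed.

Lemma ev_scaleF c x F : ev x (fun g => c * F g) = c * ev x F.
Proof. by rewrite /ev mulr_sumr; apply: eq_bigr => p _; rewrite mulrCA. Qed.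

Lemma ev_swap x y (H : G -> G -> k) :
  ev x (fun a => ev y (H a)) = ev y (fun b => ev x (H^~ b)).
Proof.
rewrite /ev; under eq_bigr do rewrite mulr_sumr.
rewrite exchange_big; apply: eq_bigr => q _; rewrite mulr_sumr.
by apply: eq_bigr => p _; rewrite mulrCA.
Qed.

Lemma ev_support x F (S : seq G) : uniq S -> {subset map snd x <= S} ->
  ev x F = \sum_(g <- S) kg_coef x g * F g.
Proof.
move=> uS xS; rewrite /ev /kg_coef.
under [RHS]eq_bigr do rewrite big_mkcond mulr_suml.
rewrite exchange_big; apply: eq_big_seq => p px /=.
have pS : p.2 \in S by apply: xS; apply: map_f.
rewrite (perm_big _ (perm_to_rem pS)) big_cons eqxx big1_seq /= ?addr0 // => g.
rewrite (mem_rem_uniq _ uS) inE => /andP[gp _]; rewrite eq_sym (negbTE gp).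
exact: mul0r.
Qed.

Lemma coef_ev x g : kg_coef x g = ev x (fun h => (h == g)%:R).
Proof.
rewrite /kg_coef /ev big_mkcond; apply: eq_bigr => p _.
by case: eqP => _; rewrite ?mulr1 ?mulr0.
Qed.

Lemma kg_eqP x y : kg_eq x y <-> forall F, ev x F = ev y F.
Proof.
split=> [eq_xy F | eq_ev g]; last first.
  by rewrite !coef_ev eq_ev.
have sub_xy z : {subset z <= x ++ y} -> {subset map snd z <= undup (map snd (x ++ y))}.
  by move=> zxy _ /mapP[p pz ->]; rewrite mem_undup; apply: map_f; apply: zxy.
rewrite !(@ev_support _ F (undup (map snd (x ++ y)))) ?undup_uniq //.
- by apply: eq_bigr => g _; rewrite eq_xy.
- by apply: sub_xy => p py; rewrite mem_cat py orbT.
- by apply: sub_xy => p px; rewrite mem_cat px.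
Qed.

End Evaluation.

Section Ideal.
Variables (k : fieldType) (G : groupType).
Implicit Types (x y z u v : kg k G).

#[local] Instance kg_eq_Equivalence : Equivalence (@kg_eq k G).
Proof. by split=> [x g | x y eq_xy g | x y z eq_xy eq_yz g]; rewrite ?eq_xy ?eq_yz. Qed.

#[local] Instance kg_mul_Proper :
  Proper (@kg_eq k G ==> @kg_eq k G ==> @kg_eq k G) (@kg_mul k G).
Proof.
move=> x x' /kg_eqP eq_x y y' /kg_eqP eq_y; apply/kg_eqP => F.
by rewrite !ev_mul eq_x; apply: ev_ext => a; apply: eq_y.
Qed.

#[local] Instance kg_sub_Proper :
  Proper (@kg_eq k G ==> @kg_eq k G ==> @kg_eq k G) (@kg_sub k G).
Proof.
move=> x x' /kg_eqP eq_x y y' /kg_eqP eq_y; apply/kg_eqP => F.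
by rewrite !ev_sub eq_x eq_y.
Qed.

#[local] Instance kg_scale_Proper c :
  Proper (@kg_eq k G ==> @kg_eq k G) (@kg_scale k G c).
Proof. by move=> x x' /kg_eqP eq_x; apply/kg_eqP => F; rewrite !ev_scale eq_x. Qed.

Lemma kg_mulA x y z : kg_eq (kg_mul (kg_mul x y) z) (kg_mul x (kg_mul y z)).
Proof.
apply/kg_eqP => F; rewrite !ev_mul; apply: ev_ext => a.
by rewrite ev_mul; apply: ev_ext => b; apply: ev_ext => c; rewrite mulgA.
Qed.

Lemma kg_mul1l x : kg_eq (kg_mul (kg_of k 1%g) x) x.
Proof. by apply/kg_eqP => F; rewrite ev_mul ev_of; apply: ev_ext => g; rewrite mul1g. Qed.

Lemma kg_mul1r x : kg_eq (kg_mul x (kg_of k 1%g)) x.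
Proof. by apply/kg_eqP => F; rewrite ev_mul; apply: ev_ext => g; rewrite ev_of mulg1. Qed.

Lemma kg_scale_mul c x : kg_eq (kg_scale c x) (kg_mul [:: (c, 1%g)] x).
Proof.
apply/kg_eqP => F; rewrite ev_mul ev_scale /ev big_seq1 /=.
by congr (_ * _); apply: eq_bigr => p _; rewrite mul1g.
Qed.

Lemma kg_star_mul x y :
  kg_eq (kg_star (kg_mul x y)) (kg_mul (kg_star y) (kg_star x)).
Proof.
apply/kg_eqP => F; rewrite ev_star !ev_mul ev_star ev_swap.
by apply: ev_ext => b; rewrite ev_star; apply: ev_ext => a; rewrite invgM.
Qed.

Lemma kg_star_sub x y :
  kg_eq (kg_star (kg_sub x y)) (kg_sub (kg_star x) (kg_star y)).
Proof. by apply/kg_eqP => F; rewrite ev_star !ev_sub !ev_star. Qed.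

Lemma kg_sub_swap x y : kg_eq (kg_sub x y) (kg_scale (-1) (kg_sub y x)).
Proof. by apply/kg_eqP => F; rewrite ev_scale !ev_sub mulN1r opprB. Qed.

Lemma kg_mul_scale_l c x y :
  kg_eq (kg_mul (kg_scale c x) y) (kg_scale c (kg_mul x y)).
Proof. by apply/kg_eqP => F; rewrite ev_mul !ev_scale ev_mul. Qed.

Lemma kg_mul_scale_r c x y :
  kg_eq (kg_mul x (kg_scale c y)) (kg_scale c (kg_mul x y)).
Proof.
apply/kg_eqP => F; rewrite ev_scale !ev_mul -ev_scaleF.
by apply: ev_ext => a; rewrite ev_scale.
Qed.

Definition genI (t : kg k G * kg k G * kg k G * kg k G) : kg k G :=
  kg_mul (kg_mul t.1.1.1 (kg_sub (kg_mul t.1.1.2 t.1.2) (kg_mul t.1.2 t.1.1.2))) t.2.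

Lemma in_IP x : in_I x <-> exists s : seq (kg k G * kg k G * kg k G * kg k G),
  (forall t, t \in s -> kg_eq (kg_star t.1.2) t.1.2) /\
  forall F, ev x F = \sum_(t <- s) ev (genI t) F.
Proof.
split=> -[s [sym_s eq_x]]; exists s; split=> //.
  by move=> F; rewrite ((kg_eqP _ _).1 eq_x) ev_flatten.
by apply/kg_eqP => F; rewrite eq_x ev_flatten.
Qed.

Lemma in_I_eq x y : in_I x -> kg_eq x y -> in_I y.
Proof.
move=> /in_IP[s [sym_s eq_x]] /kg_eqP eq_xy; apply/in_IP.
by exists s; split=> // F; rewrite -eq_xy.
Qed.

Lemma in_I0 : @in_I k G [::].
Proof. by apply/in_IP; exists [::]; split=> // F; rewrite ev_nil big_nil. Qed.

Lemma in_ID x y : in_I x -> in_I y -> in_I (kg_add x y).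
Proof.
move=> /in_IP[s1 [sym1 eq1]] /in_IP[s2 [sym2 eq2]]; apply/in_IP.
exists (s1 ++ s2); split=> [t | F]; last by rewrite ev_cat big_cat eq1 eq2.
by rewrite mem_cat => /orP[]; [apply: sym1 | apply: sym2].
Qed.

Lemma in_I_mull u x : in_I x -> in_I (kg_mul u x).
Proof.
move=> /in_IP[s [sym_s eq_x]]; apply/in_IP.
exists [seq (kg_mul u t.1.1.1, t.1.1.2, t.1.2, t.2) | t <- s].
split=> [_ /mapP[t ts ->] | F]; first exact: sym_s ts.
rewrite big_map ev_mul; under ev_ext do rewrite eq_x.
rewrite ev_sumF; apply: eq_bigr => t _.
by rewrite -ev_mul; apply: (kg_eqP _ _).1; rewrite /genI /= !kg_mulA.
Qed.

Lemma in_I_mulr x v : in_I x -> in_I (kg_mul x v).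
Proof.
move=> /in_IP[s [sym_s eq_x]]; apply/in_IP.
exists [seq (t.1.1.1, t.1.1.2, t.1.2, kg_mul t.2 v) | t <- s].
split=> [_ /mapP[t ts ->] | F]; first exact: sym_s ts.
rewrite big_map ev_mul eq_x; apply: eq_bigr => t _.
by rewrite -ev_mul; apply: (kg_eqP _ _).1; rewrite /genI /= !kg_mulA.
Qed.

Lemma in_I_scale c x : in_I x -> in_I (kg_scale c x).
Proof.
by move=> Ix; apply: in_I_eq (in_I_mull [:: (c, 1%g : G)] Ix) _; rewrite kg_scale_mul.
Qed.

Lemma in_I_gen (a b : kg k G) :
  kg_eq (kg_star b) b -> in_I (kg_sub (kg_mul a b) (kg_mul b a)).
Proof.
move=> sym_b; apply/in_IP; exists [:: (kg_of k 1%g, a, b, kg_of k 1%g)].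
split=> [t /[1!inE] /eqP -> // | F].
by rewrite big_seq1; apply: (kg_eqP _ _).1; rewrite /genI /= kg_mul1l kg_mul1r.
Qed.

(* I is stable under star: for symmetric b,
   star (u (a b - b a) v) = (- star v) (star a  b - b  star a) (star u). *)
Lemma in_I_star x : in_I x -> in_I (kg_star x).
Proof.
move=> /in_IP[s [sym_s eq_x]]; apply/in_IP.
exists [seq (kg_scale (-1) (kg_star t.2), kg_star t.1.1.2, t.1.2, kg_star t.1.1.1)
        | t <- s].
split=> [_ /mapP[t ts ->] | F]; first exact: sym_s ts.
rewrite big_map ev_star eq_x; apply: eq_big_seq => t ts.
rewrite -ev_star; apply: (kg_eqP _ _).1; rewrite /genI /=.
rewrite !kg_star_mul kg_star_sub !kg_star_mul (sym_s t ts) kg_sub_swap.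
by rewrite !kg_mul_scale_l kg_mul_scale_r kg_mulA.
Qed.
End Ideal.

Section Congruence.
Variables (k : fieldType) (G : groupType).
Implicit Types (x y z : kg k G).

Lemma AG_eqI x y z : in_I z -> kg_eq z (kg_sub x y) -> AG_eq x y.
Proof. exact: in_I_eq. Qed.

Lemma AG_of_kg_eq x y : kg_eq x y -> AG_eq x y.
Proof.
move=> /kg_eqP eq_xy; apply: (AG_eqI (in_I0 k G)).
by apply/kg_eqP => F; rewrite ev_nil ev_sub eq_xy subrr.
Qed.

Lemma AG_sym x y : AG_eq x y -> AG_eq y x.
Proof.
move=> Ixy; apply: (AG_eqI (in_I_scale (-1) Ixy)).
by apply/kg_eqP => F; rewrite ev_scale !ev_sub mulN1r opprB.
Qed.

Lemma AG_trans x y z : AG_eq x y -> AG_eq y z -> AG_eq x z.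
Proof.
move=> Ixy Iyz; apply: (AG_eqI (in_ID Ixy Iyz)).
by apply/kg_eqP => F; rewrite ev_cat !ev_sub addrA subrK.
Qed.

Lemma AG_add x x' y y' : AG_eq x x' -> AG_eq y y' -> AG_eq (x ++ y) (x' ++ y').
Proof.
move=> Ix Iy; apply: (AG_eqI (in_ID Ix Iy)).
by apply/kg_eqP => F; rewrite !(ev_cat, ev_sub) opprD addrACA.
Qed.

Lemma AG_scale c x x' : AG_eq x x' -> AG_eq (kg_scale c x) (kg_scale c x').
Proof.
move=> Ix; apply: (AG_eqI (in_I_scale c Ix)).
by apply/kg_eqP => F; rewrite !(ev_sub, ev_scale) mulrBr.
Qed.

Lemma AG_star x x' : AG_eq x x' -> AG_eq (kg_star x) (kg_star x').
Proof.
move=> Ix; apply: (AG_eqI (in_I_star Ix)).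
by apply/kg_eqP => F; rewrite ev_star !ev_sub !ev_star.
Qed.

(* x y - x' y' = (x - x') y + x' (y - y'). *)
Lemma AG_mul x x' y y' : AG_eq x x' -> AG_eq y y' ->
  AG_eq (kg_mul x y) (kg_mul x' y').
Proof.
move=> Ix Iy; apply: (AG_eqI (in_ID (in_I_mulr y Ix) (in_I_mull x' Iy))).
apply/kg_eqP => F; rewrite ev_cat !ev_sub !ev_mul.
under [X in _ + X = _]ev_ext do rewrite ev_sub.
by rewrite ev_subF ev_sub addrA subrK.
Qed.

End Congruence.

Section QuotientRing.
Local Open Scope quotient_scope.
Variables (k : fieldType) (G : groupType).
Implicit Types (x y z : kg k G).

(* eq_quot needs a boolean equivalence: decide AG_eq classically. *)
Definition AG_rel x y : bool :=
  if excluded_middle_informative (AG_eq x y) then true else false.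

Lemma AG_relP x y : AG_rel x y <-> AG_eq x y.
Proof. by rewrite /AG_rel; case: excluded_middle_informative. Qed.

Lemma AG_rel_refl : ssrbool.reflexive AG_rel.
Proof. by move=> x; apply/AG_relP/AG_of_kg_eq. Qed.

Lemma AG_rel_sym : ssrbool.symmetric AG_rel.
Proof. by move=> x y; apply/idP/idP => /AG_relP/AG_sym/AG_relP. Qed.

Lemma AG_rel_trans : ssrbool.transitive AG_rel.
Proof. by move=> y x z /AG_relP Ixy /AG_relP Iyz; apply/AG_relP; apply: AG_trans Iyz. Qed.

Canonical AG_equiv :=
  @EquivRelPack _ AG_rel (EquivClass AG_rel_refl AG_rel_sym AG_rel_trans).

Definition AG := {eq_quot AG_equiv}.
HB.instance Definition _ := Choice.copy AG {eq_quot AG_equiv}.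

Definition toAG x : AG := \pi_AG x.

Lemma toAG_eqP x y : toAG x = toAG y <-> AG_eq x y.
Proof. by split=> [/eqmodP/AG_relP | /AG_relP/eqmodP]. Qed.

Lemma toAG_repr (a : AG) : toAG (repr a) = a.
Proof. exact: reprK. Qed.

Lemma repr_toAG x : AG_eq (repr (toAG x)) x.
Proof. by apply/toAG_eqP; rewrite toAG_repr. Qed.

Lemma toAG_kg_eq x y : kg_eq x y -> toAG x = toAG y.
Proof. by move=> eq_xy; apply/toAG_eqP/AG_of_kg_eq. Qed.

Lemma AG_ind (P : AG -> Prop) : (forall x, P (toAG x)) -> forall a, P a.
Proof. by move=> Px a; rewrite -(toAG_repr a). Qed.

Definition addAG (a b : AG) : AG := toAG (repr a ++ repr b).
Definition oppAG (a : AG) : AG := toAG (kg_scale (-1) (repr a)).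
Definition mulAG (a b : AG) : AG := toAG (kg_mul (repr a) (repr b)).

Lemma addAG_toAG x y : addAG (toAG x) (toAG y) = toAG (x ++ y).
Proof. by apply/toAG_eqP; apply: AG_add; apply: repr_toAG. Qed.

Lemma oppAG_toAG x : oppAG (toAG x) = toAG (kg_scale (-1) x).
Proof. by apply/toAG_eqP; apply: AG_scale; apply: repr_toAG. Qed.

Lemma mulAG_toAG x y : mulAG (toAG x) (toAG y) = toAG (kg_mul x y).
Proof. by apply/toAG_eqP; apply: AG_mul; apply: repr_toAG. Qed.

Lemma addAGA : associative addAG.
Proof.
by elim/AG_ind=> x; elim/AG_ind=> y; elim/AG_ind=> z; rewrite !addAG_toAG catA.
Qed.

Lemma addAGC : commutative addAG.
Proof.
elim/AG_ind=> x; elim/AG_ind=> y; rewrite !addAG_toAG; apply: toAG_kg_eq.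
by apply/kg_eqP => F; rewrite !ev_cat addrC.
Qed.

Lemma add0AG : left_id (toAG [::]) addAG.
Proof. by elim/AG_ind=> x; rewrite addAG_toAG. Qed.

Lemma addNAG : left_inverse (toAG [::]) oppAG addAG.
Proof.
elim/AG_ind=> x; rewrite oppAG_toAG addAG_toAG; apply: toAG_kg_eq.
by apply/kg_eqP => F; rewrite ev_cat ev_scale ev_nil mulN1r addNr.
Qed.

HB.instance Definition _ := GRing.isZmodule.Build AG addAGA addAGC add0AG addNAG.

Lemma mulAGA : associative mulAG.
Proof.
elim/AG_ind=> x; elim/AG_ind=> y; elim/AG_ind=> z.
by rewrite !mulAG_toAG (toAG_kg_eq (kg_mulA x y z)).
Qed.

Lemma mul1AG : left_id (toAG (kg_of k 1%g)) mulAG.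
Proof. by elim/AG_ind=> x; rewrite mulAG_toAG; apply: toAG_kg_eq; exact: kg_mul1l. Qed.

Lemma mulAG1 : right_id (toAG (kg_of k 1%g)) mulAG.
Proof. by elim/AG_ind=> x; rewrite mulAG_toAG; apply: toAG_kg_eq; exact: kg_mul1r. Qed.

Lemma mulAGDl : left_distributive mulAG addAG.
Proof.
elim/AG_ind=> x; elim/AG_ind=> y; elim/AG_ind=> z.
rewrite !(addAG_toAG, mulAG_toAG); apply: toAG_kg_eq.
by apply/kg_eqP => F; rewrite !(ev_mul, ev_cat).
Qed.

Lemma mulAGDr : right_distributive mulAG addAG.
Proof.
elim/AG_ind=> x; elim/AG_ind=> y; elim/AG_ind=> z.
rewrite !(addAG_toAG, mulAG_toAG); apply: toAG_kg_eq.
apply/kg_eqP => F; rewrite ev_cat !ev_mul -ev_addF.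
by apply: ev_ext => a; rewrite ev_cat.
Qed.

HB.instance Definition _ :=
  GRing.Zmodule_isPzRing.Build AG mulAGA mul1AG mulAG1 mulAGDl mulAGDr.

Lemma toAG_add x y : toAG (x ++ y) = toAG x + toAG y.
Proof. by rewrite -addAG_toAG. Qed.

Lemma toAG_mul x y : toAG (kg_mul x y) = toAG x * toAG y.
Proof. by rewrite -mulAG_toAG. Qed.

Lemma toAG_sub x y : toAG (kg_sub x y) = toAG x - toAG y.
Proof. by rewrite toAG_add -oppAG_toAG. Qed.

Lemma toAG_flatten (T : Type) (f : T -> kg k G) s :
  toAG (flatten [seq f t | t <- s]) = \sum_(t <- s) toAG (f t).
Proof.
elim: s => [|t s IHs] /=; first by rewrite big_nil.
by rewrite toAG_add IHs big_cons.
Qed.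

End QuotientRing.

Section InvolutionOnAG.
Variables (k : fieldType) (G : groupType).
Implicit Types (x y : kg k G) (a b : AG k G).

Definition starAG a : AG k G := toAG (kg_star (repr a)).

Lemma starAG_toAG x : starAG (toAG x) = toAG (kg_star x).
Proof. by apply/toAG_eqP; apply: AG_star; apply: repr_toAG. Qed.

Lemma starAGD : {morph starAG : a b / a + b}.
Proof.
elim/AG_ind=> x; elim/AG_ind=> y.
by rewrite -toAG_add !starAG_toAG -toAG_add /kg_star map_cat.
Qed.

Lemma starAGM a b : starAG (a * b) = starAG b * starAG a.
Proof.
elim/AG_ind: a => x; elim/AG_ind: b => y.
by rewrite -toAG_mul !starAG_toAG -toAG_mul; apply: toAG_kg_eq; exact: kg_star_mul.
Qed.

Lemma starAGK : involutive starAG.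
Proof.
elim/AG_ind=> x; rewrite !starAG_toAG; apply: toAG_kg_eq; apply/kg_eqP => F.
by rewrite !ev_star; apply: ev_ext => g; rewrite invgK.
Qed.

Lemma toAG_central x : kg_eq (kg_star x) x -> forall a, toAG x * a = a * toAG x.
Proof.
move=> sym_x; elim/AG_ind=> y; rewrite -!toAG_mul; apply/toAG_eqP.
by apply: AG_sym; apply: in_I_gen.
Qed.

Lemma trAG_central a c : tr starAG a * c = c * tr starAG a.
Proof.
elim/AG_ind: a => x; rewrite /tr starAG_toAG -toAG_add; apply: toAG_central.
apply/kg_eqP => F; rewrite ev_star !ev_cat !ev_star addrC.
by congr (_ + _); apply: ev_ext => g; rewrite invgK.
Qed.

Definition gAG (g : G) : AG k G := toAG (kg_of k g).

Lemma gAGM : {morph gAG : g h / (g * h)%g >-> g * h}.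
Proof.
move=> g h; rewrite /gAG -toAG_mul; apply: toAG_kg_eq; apply/kg_eqP => F.
by rewrite ev_mul !ev_of.
Qed.

Lemma gAG1 : gAG 1%g = 1.
Proof. by []. Qed.

Lemma star_gAG g : starAG (gAG g) = gAG g^-1%g.
Proof. exact: starAG_toAG. Qed.

Definition halfAG : AG k G := toAG [:: (2%:R^-1, 1%g)].

Lemma halfAG2 : (2%:R : k) != 0 -> halfAG + halfAG = 1.
Proof.
move=> two_nz; rewrite /halfAG -toAG_add -gAG1; apply: toAG_kg_eq; apply/kg_eqP => F.
rewrite ev_cat ev_of /ev !big_seq1 /= -mulrDl -mulr2n.
by rewrite -(mulr_natr (2%:R^-1)) mulVf // mul1r.
Qed.

End InvolutionOnAG.

Section Translation.
Variables (k : fieldType) (G : groupType).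
Implicit Types (x y : kg k G).

Lemma toAG_bar x : toAG (kg_bar x) = halfAG k G * tr (@starAG k G) (toAG x).
Proof.
rewrite /kg_bar (toAG_kg_eq (kg_scale_mul _ _)) toAG_mul.
by rewrite /kg_add toAG_add /tr starAG_toAG.
Qed.

Lemma toAG_sharp_gen x l :
  toAG (sharp_gen x l) = delta (@starAG k G) (halfAG k G) (@gAG k G) (toAG x) l.
Proof. by rewrite /sharp_gen toAG_sub !toAG_bar !toAG_mul /delta mulrBr. Qed.

Lemma in_sharpE x : in_sharp x <-> sym (@starAG k G) (toAG x).
Proof. by rewrite /sym starAG_toAG; apply: iff_sym; apply: toAG_eqP. Qed.

Lemma in_sharpsharpE (L : G -> Prop) y :
  in_sharpsharp L y <-> inJ (@starAG k G) (halfAG k G) (@gAG k G) L (toAG y).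
Proof.
split=> [[s [sym_s /toAG_eqP ->]] | [s [sym_s eq_y]]].
  exists [seq (toAG t.1.1, toAG t.1.2, t.2) | t <- s].
  split=> [_ /mapP[t ts ->] | ]; first by have [/in_sharpE] := sym_s t ts.
  rewrite toAG_flatten big_map; apply: eq_bigr => t _.
  by rewrite toAG_mul toAG_sharp_gen.
exists [seq (repr t.1.1, repr t.1.2, t.2) | t <- s].
split=> [_ /mapP[t ts ->] | ]; first by rewrite /= in_sharpE toAG_repr; apply: sym_s.
apply/toAG_eqP; rewrite eq_y toAG_flatten big_map; apply: eq_bigr => t _.
by rewrite toAG_mul toAG_sharp_gen !toAG_repr.
Qed.

End Translation.

Theorem mainTheorem4 (k : fieldType) (hk : [pchar k]%R =i pred0)
  (G : groupType) (K L : G -> Prop)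
  (hK : is_normal K) (hLK : forall l, L l -> K l)
  (hcl : is_normal_closure L K) :
  forall y : kg k G, in_sharpsharp L y <-> in_sharpsharp K y.
Proof.
have two_nz : (2%:R : k) != 0 by rewrite (GRing.pcharf0P k).1.
move=> y; rewrite !in_sharpsharpE.
exact: (inJ_normal_closure (@starAGD k G) (@starAGM k G) (@starAGK k G)
  (@trAG_central k G) (halfAG2 G two_nz) (@gAGM k G) (@gAG1 k G) (@star_gAG k G)).
Qed.
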